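(* Let $\phi$ satisfy $B_\phi>0$. For every centred symmetric probability distribution $\mu$ on $\mathbb{R}$ with $\mu_2=1$ and $\mu_6<\infty$ and every $\mathfrak g\in\mathbb{R}$, $$\theta^2\ \ge\ \frac{1}{144}\Big(A_\phi-\frac{C_\phi^2}{B_\phi}\Big)\ \ge 0 .$$ Moreover the bound is approached: if $\mu_4>1$, $\mu_6=\mu_4^2$ and $\mathfrak g=\dfrac{\mu_4(C_\phi-3B_\phi)+6B_\phi}{12B_\phi(\mu_4-1)}$, then $\theta^2=\frac{\mu_4^2}{144}(A_\phi-C_\phi^2/B_\phi)$, which tends to the lower bound as $\mu_4\downarrow1$. For $a>1$, the symmetric distribution $\nu(a)$ on $\{-\sqrt a,0,\sqrt a\}$ with $\nu(a)(\{\pm\sqrt a\})=1/(2a)$ satisfies $\mu_2=1$, $\mu_4=a$, $\mu_6=a^2$.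
   Context: Here $\pi=e^\phi$ is a probability density on $\mathbb{R}$ with $A_\phi=\mathbb{E}_\pi[(\phi''')^2]$, $B_\phi=\mathbb{E}_\pi[(\phi'\phi'')^2]$, $C_\phi=\mathbb{E}_\pi[\phi'\phi''\phi''']$ finite, $\mu_k=\int z^k\mu(dz)$, and $\theta^2=\mu_6\{\tfrac{1}{144}A_\phi+(\tfrac14+\mathfrak g)^2B_\phi-\tfrac16(\tfrac14+\mathfrak g)C_\phi\}+\mu_4\{\tfrac16(\tfrac12+\mathfrak g)C_\phi-2(\tfrac14+\mathfrak g)(\tfrac12+\mathfrak g)B_\phi\}+(\tfrac12+\mathfrak g)^2B_\phi$, where $\mathfrak g$ plays the role of $g''(1)$ for the balancing function $g$. *)

From HB Require Import structures.
From mathcomp Require Import all_boot all_order all_algebra.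
From mathcomp Require Import all_classical all_reals all_analysis.
Set Implicit Arguments. Unset Strict Implicit. Unset Printing Implicit Defensive.
Import Order.TTheory GRing.Theory Num.Theory.
Import numFieldNormedType.Exports.
Local Open Scope classical_set_scope.
Local Open Scope ring_scope.

Section defs.
Variable R : realType.

Definition thrice_derivable (phi : R -> R) : Prop :=
  forall x, derivable phi x 1 /\ derivable (derive1n 1 phi) x 1 /\
            derivable (derive1n 2 phi) x 1.

Definition is_log_density (phi : R -> R) : Prop :=
  (\int[@lebesgue_measure R]_x (expR (phi x))%:E = 1)%E.

Definition pi_integrable (phi f : R -> R) : Prop :=
  (@lebesgue_measure R).-integrable setT (fun x => (expR (phi x) * f x)%:E).

Definition Epi (phi f : R -> R) : R :=
  fine (\int[@lebesgue_measure R]_x (expR (phi x) * f x)%:E).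

Definition f_A (phi : R -> R) := fun x => (derive1n 3 phi x) ^+ 2.
Definition f_B (phi : R -> R) :=
  fun x => (derive1n 1 phi x * derive1n 2 phi x) ^+ 2.
Definition f_C (phi : R -> R) :=
  fun x => derive1n 1 phi x * derive1n 2 phi x * derive1n 3 phi x.

Definition A_phi phi := Epi phi (f_A phi).
Definition B_phi phi := Epi phi (f_B phi).
Definition C_phi phi := Epi phi (f_C phi).

Definition moment (mu : probability R R) (k : nat) : R :=
  fine (\int[mu]_x (x ^+ k)%:E).

Definition symmetric_prob (mu : probability R R) : Prop :=
  forall A : set R, measurable A -> mu ((fun x => - x) @^-1` A) = mu A.

Definition centred (mu : probability R R) : Prop :=
  (\int[mu]_x x%:E = 0)%E.

(* theta^2 as a function of A, B, C, g = g''(1), mu_4, mu_6 *)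
Definition theta2 (A B C g m4 m6 : R) : R :=
  m6 * (A / 144 + (1/4 + g) ^+ 2 * B - (1/6) * (1/4 + g) * C)
  + m4 * ((1/6) * (1/2 + g) * C - 2 * (1/4 + g) * (1/2 + g) * B)
  + (1/2 + g) ^+ 2 * B.

End defs.

From HB Require Import structures.
From mathcomp Require Import all_boot all_order all_algebra.
From mathcomp Require Import all_classical all_reals all_analysis.
From mathcomp Require Import ring measurable_realfun.
Set Implicit Arguments. Unset Strict Implicit. Unset Printing Implicit Defensive.
Import Order.TTheory GRing.Theory Num.Theory.
Import numFieldNormedType.Exports.
Local Open Scope classical_set_scope.
Local Open Scope ring_scope.

(* Completing the square in g writes theta2 - K/144, with K = A - C^2/B, as
   (mu6 - 1) K/144 + B (1/2 + g)^2 (mu6 - mu4^2)/mu6 + (B/mu6) (...)^2.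
   Each term is nonnegative because K >= 0, mu4 >= 1 and mu4^2 <= mu6, and
   these three inequalities are all instances of Cauchy-Schwarz:
   E_pi[phi'phi'' . phi''']^2 <= E_pi[(phi'phi'')^2] E_pi[phi'''^2],
   E_mu[1 . x^2]^2 <= E_mu[1] E_mu[x^4] and E_mu[x . x^3]^2 <= E_mu[x^2] E_mu[x^6].
   The given choice of g kills the last square, and mu6 = mu4^2 the middle
   term.  The moments of nu(a) are finite sums over its three atoms. *)

Lemma quadratic_form_ge0 (R : realFieldType) (a b c t : R) :
  0 <= a -> 0 <= c -> b ^+ 2 <= a * c -> 0 <= t ^+ 2 * a + 2 * t * b + c.
Proof.
move=> a0 c0; have [-> | a_neq0] := eqVneq a 0 => bac.
  rewrite mul0r in bac.
  have -> : b = 0 by apply/eqP; rewrite -sqrf_eq0 eq_le bac sqr_ge0.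
  by rewrite !mulr0 !add0r.
have : 0 <= a * (t ^+ 2 * a + 2 * t * b + c).
  have -> : a * (t ^+ 2 * a + 2 * t * b + c) = (t * a + b) ^+ 2 + (a * c - b ^+ 2).
    by ring.
  by rewrite addr_ge0 ?sqr_ge0 ?subr_ge0.
by rewrite pmulr_rge0 // lt_def a_neq0.
Qed.

Section cauchy_schwarz.
Context d (T : measurableType d) (R : realType) (mu : {measure set T -> \bar R}).

Lemma integral_quadratic_ge0 (f g h : T -> R) (t : R) :
  mu.-integrable setT (fun x => (f x)%:E) ->
  mu.-integrable setT (fun x => (g x)%:E) ->
  mu.-integrable setT (fun x => (h x)%:E) ->
  (forall x, 0 <= t ^+ 2 * f x + 2 * t * g x + h x) ->
  0 <= t ^+ 2 * fine (\int[mu]_x (f x)%:E) + 2 * t * fine (\int[mu]_x (g x)%:E)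
       + fine (\int[mu]_x (h x)%:E).
Proof.
move=> If Ig Ih qge0.
have := @integral_ge0 _ _ _ mu setT (fun x => (t ^+ 2 * f x + 2 * t * g x + h x)%:E).
have -> : (fun x => (t ^+ 2 * f x + 2 * t * g x + h x)%:E) =
    (fun x => (t ^+ 2)%:E * (f x)%:E + (2 * t)%:E * (g x)%:E + (h x)%:E)%E by [].
rewrite integralD //; last by apply: integrableD => //; exact: integrableZl.
rewrite integralD //; try exact: integrableZl.
rewrite !integralZl // -(fineK (integrable_fin_num _ If)) //.
rewrite -(fineK (integrable_fin_num _ Ig)) // -(fineK (integrable_fin_num _ Ih)) //.
by rewrite -!EFinM -!EFinD /=; apply=> x _; rewrite lee_fin.
Qed.

Lemma integral_cauchy_schwarz (f g h : T -> R) :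
  mu.-integrable setT (fun x => (f x)%:E) ->
  mu.-integrable setT (fun x => (g x)%:E) ->
  mu.-integrable setT (fun x => (h x)%:E) ->
  (forall x, 0 <= f x) -> (forall x, 0 <= h x) ->
  (forall x, g x ^+ 2 <= f x * h x) ->
  0 < fine (\int[mu]_x (f x)%:E) ->
  fine (\int[mu]_x (g x)%:E) ^+ 2 <=
    fine (\int[mu]_x (f x)%:E) * fine (\int[mu]_x (h x)%:E).
Proof.
move=> If Ig Ih f0 h0 ghf.
set F := fine _; set G := fine _; set H := fine _ => F_gt0.
have : 0 <= (- G / F) ^+ 2 * F + 2 * (- G / F) * G + H.
  by apply: integral_quadratic_ge0 => // x; exact: quadratic_form_ge0.
have -> : (- G / F) ^+ 2 * F + 2 * (- G / F) * G + H = (F * H - G ^+ 2) / F.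
  by field; rewrite gt_eqF.
by rewrite pmulr_lge0 ?invr_gt0 // subr_ge0.
Qed.

End cauchy_schwarz.

Lemma normrX_le1D (R : realDomainType) (x : R) (k n : nat) :
  (k <= 2 * n)%N -> `|x ^+ k| <= 1 + x ^+ (2 * n).
Proof.
move=> le_k2n; rewrite normrX exprM -real_normK ?num_real // -exprM.
have [x_le1 | x_gt1] := lerP `|x| 1.
  by apply: ler_wpDr; rewrite ?exprn_ge0 ?exprn_ile1.
by rewrite ler_wpDl // (ler_eXn2l x_gt1).
Qed.

Section moments.
Context (R : realType).

Lemma exprn_integrable (mu : {finite_measure set R -> \bar R}) (k n : nat) :
  (k <= 2 * n)%N -> mu.-integrable setT (fun x => (x ^+ (2 * n))%:E) ->
  mu.-integrable setT (fun x => (x ^+ k)%:E).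
Proof.
move=> le_k2n I2n.
have I1 := @finite_measure_integrable_cst _ _ _ mu setT 1 measurableT.
apply: (le_integrable measurableT _ _ (integrableD measurableT I1 I2n)).
  by apply/measurable_EFinP; exact: exprn_measurable.
move=> x _; have le_x := normrX_le1D x le_k2n.
by rewrite lee_fin /= (ger0_norm (le_trans (normr_ge0 _) le_x)).
Qed.

Lemma moment0 (mu : probability R R) : moment mu 0 = 1.
Proof.
rewrite /moment; under eq_integral do rewrite expr0.
by rewrite integral_cst // mul1e; exact: (congr1 fine (probability_setT mu)).
Qed.

Lemma moment_log_convex (mu : probability R R) (i j : nat) : (i <= j)%N ->
  mu.-integrable setT (fun x => (x ^+ (2 * j))%:E) ->
  0 < moment mu (2 * i) ->
  moment mu (i + j) ^+ 2 <= moment mu (2 * i) * moment mu (2 * j).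
Proof.
move=> le_ij I2j.
apply: (@integral_cauchy_schwarz _ _ _ mu (fun x => x ^+ (2 * i))
  (fun x => x ^+ (i + j)) (fun x => x ^+ (2 * j))) => //.
- by apply: exprn_integrable I2j; rewrite leq_mul2l le_ij orbT.
- by apply: exprn_integrable I2j; rewrite mul2n -addnn leq_add2r.
- by move=> x; rewrite exprM exprn_ge0 ?sqr_ge0.
- by move=> x; rewrite exprM exprn_ge0 ?sqr_ge0.
- by move=> x; rewrite -exprD -exprM mulnC mulnDr.
Qed.

Lemma moment4_bounds (mu : probability R R) : moment mu 2 = 1 ->
  mu.-integrable setT (fun x => (x ^+ 6)%:E) ->
  1 <= moment mu 4 /\ moment mu 4 ^+ 2 <= moment mu 6.
Proof.
move=> m2 I6.
have I4 : mu.-integrable setT (fun x => (x ^+ (2 * 2))%:E).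
  exact: (@exprn_integrable _ 4 3).
have m2_m4 : moment mu 2 ^+ 2 <= moment mu 0 * moment mu 4.
  by apply: (@moment_log_convex _ 0 2) => //; rewrite moment0.
have m4_m6 : moment mu 4 ^+ 2 <= moment mu 2 * moment mu 6.
  by apply: (@moment_log_convex _ 1 3) => //; rewrite m2.
by rewrite m2 moment0 expr1n mul1r in m2_m4; rewrite m2 mul1r in m4_m6.
Qed.

End moments.

Lemma C_phi_sqr_le (R : realType) (phi : R -> R) :
  pi_integrable phi (f_A phi) -> pi_integrable phi (f_B phi) ->
  pi_integrable phi (f_C phi) -> 0 < B_phi phi ->
  C_phi phi ^+ 2 <= B_phi phi * A_phi phi.
Proof.
move=> IA IB IC B_gt0.
rewrite /C_phi /B_phi /A_phi /Epi in B_gt0 *.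
apply: (integral_cauchy_schwarz IB IC IA) => // x.
- by rewrite mulr_ge0 ?expR_ge0 ?sqr_ge0.
- by rewrite mulr_ge0 ?expR_ge0 ?sqr_ge0.
- by rewrite /f_A /f_B /f_C le_eqVlt; apply/predU1P; left; ring.
Qed.

Section theta2.
Context (R : realType) (A B C : R).

Lemma theta2_sub_bound (g m4 m6 : R) : B != 0 -> m6 != 0 ->
  theta2 A B C g m4 m6 - (A - C ^+ 2 / B) / 144 =
  (m6 - 1) * (A - C ^+ 2 / B) / 144 + B * (1/2 + g) ^+ 2 * (m6 - m4 ^+ 2) / m6
  + B / m6 * (m6 * (1/4 + g) - m4 * (1/2 + g) - C * m6 / (12 * B)) ^+ 2.
Proof. by move=> B_neq0 m6_neq0; rewrite /theta2; field; rewrite B_neq0. Qed.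

Lemma theta2_ge_bound (g m4 m6 : R) : 0 < B -> 0 <= A - C ^+ 2 / B ->
  1 <= m4 -> m4 ^+ 2 <= m6 ->
  (A - C ^+ 2 / B) / 144 <= theta2 A B C g m4 m6.
Proof.
move=> B_gt0 K_ge0 m4_ge1 m4_m6.
have m6_ge1 : 1 <= m6 by apply: le_trans m4_m6; rewrite exprn_ege1.
have m6_gt0 : 0 < m6 := lt_le_trans ltr01 m6_ge1.
rewrite -subr_ge0 theta2_sub_bound ?gt_eqF //.
rewrite !addr_ge0 //.
- by rewrite divr_ge0 ?mulr_ge0 // subr_ge0.
- apply: divr_ge0; last exact: ltW.
  by apply: mulr_ge0; [rewrite mulr_ge0 ?sqr_ge0 // ltW | rewrite subr_ge0].
- by rewrite mulr_ge0 ?sqr_ge0 // divr_ge0 // ltW.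
Qed.

Lemma theta2_optimal (m4 : R) : B != 0 -> 1 < m4 ->
  theta2 A B C ((m4 * (C - 3 * B) + 6 * B) / (12 * B * (m4 - 1))) m4 (m4 ^+ 2)
   = m4 ^+ 2 / 144 * (A - C ^+ 2 / B).
Proof.
move=> B_neq0 m4_gt1; rewrite /theta2; field.
by rewrite B_neq0 subr_eq0 gt_eqF.
Qed.

End theta2.

Lemma cvg_sqr_div_at_right (R : realType) (k c : R) :
  (fun t : R => t ^+ 2 / k * c) @ 1^'+ --> c / k.
Proof.
apply: cvg_at_right_filter.
have -> : c / k = 1 ^+ 2 / k * c by rewrite expr1n mul1r mulrC.
by apply: cvgM; [apply: cvgM; [exact: exprn_continuous | exact: cvg_cst] | exact: cvg_cst].
Qed.

Lemma integral_over_set1 (R : realType) (mu : {measure set R -> \bar R})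
    (f : R -> R) (r : R) :
  (\int[mu]_(x in [set r]) (f x)%:E = (f r)%:E * mu [set r])%E.
Proof.
rewrite -integral_cst //; apply: eq_integral => x.
by rewrite inE => ->.
Qed.

Section three_atoms.
Context (R : realType) (nu : probability R R) (p q r wp wq wr : R).
Hypotheses (pq : p != q) (pr : p != r) (qr : q != r).
Hypotheses (nup : nu [set p] = wp%:E) (nuq : nu [set q] = wq%:E)
  (nur : nu [set r] = wr%:E) (w1 : wp + wq + wr = 1).

Lemma integral_three_atoms (f : R -> R) : measurable_fun setT f ->
  (\int[nu]_x (f x)%:E = (f p * wp + f q * wq + f r * wr)%:E)%E.
Proof.
move=> mf.
set S1 := [set p] `|` [set q]; set S := S1 `|` [set r].
have mS1 : measurable S1 by exact: measurableU.
have mS : measurable S by exact: measurableU.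
have pq0 : [disjoint [set p] & [set q]].
  by apply/disj_setPS => x [/= -> /eqP]; rewrite (negPf pq).
have S1r0 : [disjoint S1 & [set r]].
  by apply/disj_setPS => x [[/= ->|/= ->] /eqP]; rewrite ?(negPf pr) ?(negPf qr).
have nuS : nu S = 1%E.
  have nuU (A B : set R) : measurable A -> measurable B -> [disjoint A & B] ->
      nu (A `|` B) = (nu A + nu B)%E.
    by move=> mA mB /disj_set2P; exact: measureU.
  by rewrite nuU ?nuU // nup nuq nur -!EFinD w1.
have nuSC : nu (~` S) = 0%E by rewrite probability_setC // nuS subee.
have mfE D : measurable_fun D (fun x => (f x)%:E).
  by apply: measurable_funTS; exact/measurable_EFinP.
rewrite -(setUv S) integral_setU ?mfE //; last 2 first.
- exact: measurableC.
- by apply/disj_setPS; rewrite setICr.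
rewrite [X in (_ + X)%E]null_set_integral ?mfE //; last exact: measurableC.
rewrite adde0 integral_setU ?mfE // integral_setU ?mfE //.
by rewrite !integral_over_set1 !EFinD !EFinM -nup -nuq -nur.
Qed.

Lemma measure_three_atoms (D : set R) : measurable D ->
  nu D = (\1_D p * wp + \1_D q * wq + \1_D r * wr)%:E.
Proof.
move=> mD; rewrite -integral_three_atoms; last exact: measurable_indic.
by rewrite integral_indic // setIT.
Qed.

End three_atoms.

Section three_point_law.
Context (R : realType) (a : R) (nu : probability R R).
Hypotheses (a_gt1 : 1 < a)
  (nu_sqrt : nu [set Num.sqrt a] = (1 / (2 * a))%:E)
  (nu_Nsqrt : nu [set - Num.sqrt a] = (1 / (2 * a))%:E)
  (nu0 : nu [set 0] = (1 - 1 / a)%:E).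

Let a_gt0 : 0 < a := lt_trans ltr01 a_gt1.

Let sqrt_gt0 : 0 < Num.sqrt a.
Proof. by rewrite sqrtr_gt0. Qed.

Let a_neq0 : a != 0.
Proof. by rewrite gt_eqF. Qed.

Let weights_sum1 : 1 / (2 * a) + 1 / (2 * a) + (1 - 1 / a) = 1.
Proof. by field. Qed.

Let sqrt_neqN : Num.sqrt a != - Num.sqrt a.
Proof. by rewrite -subr_eq0 opprK gt_eqF // addr_gt0. Qed.

Let sqrt_neq0 : Num.sqrt a != 0.
Proof. by rewrite gt_eqF. Qed.

Let Nsqrt_neq0 : - Num.sqrt a != 0.
Proof. by rewrite oppr_eq0. Qed.

Lemma integral_three_point_law (f : R -> R) : measurable_fun setT f ->
  (\int[nu]_x (f x)%:E = (f (Num.sqrt a) * (1 / (2 * a))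
    + f (- Num.sqrt a) * (1 / (2 * a)) + f 0 * (1 - 1 / a))%:E)%E.
Proof.
exact: (integral_three_atoms sqrt_neqN sqrt_neq0 Nsqrt_neq0
  nu_sqrt nu_Nsqrt nu0 weights_sum1 (f := f)).
Qed.

Lemma three_point_law_symmetric : symmetric_prob nu.
Proof.
move=> A mA.
have mNA : measurable ((fun x : R => - x) @^-1` A).
  by rewrite -[_ @^-1` _]setTI; exact: oppr_measurable.
have nuE := measure_three_atoms sqrt_neqN sqrt_neq0 Nsqrt_neq0
  nu_sqrt nu_Nsqrt nu0 weights_sum1.
have indicN x : \1_((fun x => - x) @^-1` A) x = \1_A (- x) :> R by [].
by rewrite (nuE _ mNA) (nuE _ mA) !indicN opprK oppr0 [X in X + _]addrC.
Qed.

Lemma three_point_law_centred : centred nu.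
Proof.
rewrite /centred (@integral_three_point_law id) //.
by rewrite mulNr addrN add0r mul0r.
Qed.

Lemma integral_three_point_law_even (n : nat) :
  (\int[nu]_x (x ^+ (2 * n.+1))%:E = (a ^+ n)%:E)%E.
Proof.
rewrite integral_three_point_law; last exact: exprn_measurable.
rewrite !exprM sqrrN sqr_sqrtr ?expr0n ?ltW //=.
by congr (_%:E); rewrite exprS; field.
Qed.

Lemma three_point_law_moments : symmetric_prob nu /\ centred nu /\
  (\int[nu]_x (x ^+ 2)%:E = 1)%E /\ (\int[nu]_x (x ^+ 4)%:E = a%:E)%E /\
  (\int[nu]_x (x ^+ 6)%:E = (a ^+ 2)%:E)%E.
Proof.
split; first exact: three_point_law_symmetric.
split; first exact: three_point_law_centred.
split; first exact: (integral_three_point_law_even 0).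
split; first exact: (integral_three_point_law_even 1).
exact: (integral_three_point_law_even 2).
Qed.

End three_point_law.

Theorem proposition5 (R : realType) (phi : R -> R)
  (hphi : thrice_derivable phi)
  (hdens : is_log_density phi)
  (hA : pi_integrable phi (f_A phi))
  (hB : pi_integrable phi (f_B phi))
  (hC : pi_integrable phi (f_C phi))
  (hBpos : 0 < B_phi phi) :
  let A := A_phi phi in let B := B_phi phi in let C := C_phi phi in
  (* lower bound *)
  (forall (mu : probability R R) (g : R),
     symmetric_prob mu -> centred mu ->
     (\int[mu]_x (x ^+ 2)%:E = 1)%E ->
     mu.-integrable setT (fun x => (x ^+ 6)%:E) ->
     theta2 A B C g (moment mu 4) (moment mu 6) >= (A - C ^+ 2 / B) / 144
     /\ (A - C ^+ 2 / B) / 144 >= 0)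
  /\
  (* the bound is approached *)
  (forall (mu : probability R R) (g : R),
     symmetric_prob mu -> centred mu ->
     (\int[mu]_x (x ^+ 2)%:E = 1)%E ->
     mu.-integrable setT (fun x => (x ^+ 6)%:E) ->
     1 < moment mu 4 -> moment mu 6 = moment mu 4 ^+ 2 ->
     g = (moment mu 4 * (C - 3 * B) + 6 * B) / (12 * B * (moment mu 4 - 1)) ->
     theta2 A B C g (moment mu 4) (moment mu 6)
       = moment mu 4 ^+ 2 / 144 * (A - C ^+ 2 / B))
  /\
  ((fun t : R => t ^+ 2 / 144 * (A - C ^+ 2 / B)) @ 1^'+
     --> (A - C ^+ 2 / B) / 144)
  /\
  (* the three-point distributions nu(a) *)
  (forall (a : R), 1 < a -> forall nu : probability R R,
     nu [set Num.sqrt a] = (1 / (2 * a))%:E ->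
     nu [set - Num.sqrt a] = (1 / (2 * a))%:E ->
     nu [set 0] = (1 - 1 / a)%:E ->
     symmetric_prob nu /\ centred nu /\
     (\int[nu]_x (x ^+ 2)%:E = 1)%E /\
     (\int[nu]_x (x ^+ 4)%:E = a%:E)%E /\
     (\int[nu]_x (x ^+ 6)%:E = (a ^+ 2)%:E)%E).
Proof.
move=> A B C.
have K_ge0 : 0 <= A - C ^+ 2 / B.
  by rewrite subr_ge0 ler_pdivrMr // mulrC C_phi_sqr_le.
split; [|split; [|split]].
-
  move=> mu g _ _ mu2 I6.
  have [m4_ge1 m4_m6] := moment4_bounds (congr1 fine mu2) I6.
  by split; [exact: theta2_ge_bound | exact: divr_ge0].
- move=> mu g _ _ _ _ m4_gt1 -> ->.
  by rewrite theta2_optimal ?gt_eqF.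
- exact: cvg_sqr_div_at_right.
- move=> a a_gt1 nu; exact: three_point_law_moments.
Qed.
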